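(* Let $\mathcal{G}=(V,\mathcal{E},T)$ be a happy temporally connected temporal graph, and let $X$ be a vertex cover of its underlying graph $G_U$ with $|X|=d$. Let $\mathcal{S}$ be a minimum temporal spanner of $\mathcal{G}$ (one with the minimum number of time edges). Then the set of time edges of $\mathcal{S}$ is the union of the time-edge sets of at most $d$ temporal out-trees, each rooted at a vertex of $X$, together with at most one extra time edge incident to each vertex of $V\setminus X$.
   Context: A temporal graph is a triple $\mathcal{G}=(V,\mathcal{E},T)$ with finite vertex set $V$, time edges $\mathcal{E}\subseteq\binom{V}{2}\times\{1,\dots,T\}$ and maximum label $T$; its underlying graph $G_U$ has edge set $\{e:\exists t,(e,t)\in\mathcal{E}\}$. $\mathcal{G}$ is happy if every underlying edge has exactly one label and no two time edges sharing an endpoint have the same label (so time edges and underlying edges can be identified). A temporal path is a sequence of time edges $(e_1,t_1),\dots,(e_r,t_r)$ such that $e_1,\dots,e_r$ form a static path and $t_1<\dots<t_r$. $\mathcal{G}$ is temporally connected if every vertex has a temporal path to every other vertex. A temporal spanner of $\mathcal{G}$ is a temporally connected $(V,\mathcal{E}',T')$ with $\mathcal{E}'\subseteq\mathcal{E}$, $T'\le T$. A temporal out-tree rooted at $r$ (in $\mathcal{G}$) is a temporal subgraph $(V,\mathcal{E}_r,T)$, $\mathcal{E}_r\subseteq\mathcal{E}$, whose underlying graph is a spanning tree of $V$ and in which $r$ has a temporal path to every vertex of $V$. *)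

From mathcomp Require Import all_boot.
Set Implicit Arguments. Unset Strict Implicit. Unset Printing Implicit Defensive.

(* A time edge over vertex type V with labels in {0..T}: an (unordered) vertex
   set (required to have size 2) together with a label (required to be >= 1). *)
Notation tedge V T := ({set V} * 'I_T.+1)%type.

Section Temporal.
Variables (V : finType) (T : nat).

Definition wf_tgraph (E : {set tedge V T}) : Prop :=
  forall p, p \in E -> #|p.1| = 2 /\ (0 < p.2)%N.

Definition happy (E : {set tedge V T}) : Prop :=
  [/\ wf_tgraph E,
      (forall e (t t' : 'I_T.+1), (e, t) \in E -> (e, t') \in E -> t = t')
    & (forall e e' (t : 'I_T.+1), (e, t) \in E -> (e', t) \in E -> e != e' ->
         [disjoint e & e'])].

Definition tpath (E : {set tedge V T}) (u v : V) : Prop :=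
  exists (xs : seq V) (ts : seq 'I_T.+1),
    [/\ size ts = size xs, uniq (u :: xs), last u xs = v,
        sorted ltn (map val ts)
      & forall i, (i < size xs)%N ->
          ([set nth u (u :: xs) i; nth u (u :: xs) i.+1],
           nth ord0 ts i) \in E].

Definition tconnected (E : {set tedge V T}) : Prop :=
  forall u v, u != v -> tpath E u v.

Definition tspanner (E S : {set tedge V T}) : Prop :=
  S \subset E /\ tconnected S.

Definition min_tspanner (E S : {set tedge V T}) : Prop :=
  tspanner E S /\ forall S', tspanner E S' -> #|S| <= #|S'|.

Definition underlying (E : {set tedge V T}) : {set {set V}} :=
  [set p.1 | p in E].

Definition spath (U : {set {set V}}) (u v : V) : Prop :=
  exists xs : seq V,
    [/\ uniq (u :: xs), last u xs = v
      & forall i, (i < size xs)%N ->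
          [set nth u (u :: xs) i; nth u (u :: xs) i.+1] \in U].

Definition acyclic (U : {set {set V}}) : Prop :=
  forall (x : V) (xs : seq V), (2 <= size xs)%N -> uniq (x :: xs) ->
    (forall i, (i < size xs)%N ->
       [set nth x (x :: xs) i; nth x (x :: xs) i.+1] \in U) ->
    [set last x xs; x] \notin U.

Definition spanning_tree (U : {set {set V}}) : Prop :=
  (forall u v, spath U u v) /\ acyclic U.

Definition out_tree (E : {set tedge V T}) (r : V) (Er : {set tedge V T}) : Prop :=
  [/\ Er \subset E, spanning_tree (underlying Er)
    & forall v, v != r -> tpath Er r v].

Definition vertex_cover (E : {set tedge V T}) (X : {set V}) : Prop :=
  forall p, p \in E -> ~~ [disjoint p.1 & X].

End Temporal.

From mathcomp Require Import all_boot.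
From Stdlib Require Import Classical.
Set Implicit Arguments. Unset Strict Implicit. Unset Printing Implicit Defensive.

(* For a vertex u outside the cover X let p_u be its earliest time edge in S;
   p_u joins u to a vertex of X.  Fix x in X and, among the vertices u whose
   edge p_u ends at x, take the one, w, whose edge p_w carries the latest label.
   Happiness makes p_w the unique earliest edge at w, so the foremost tree of S
   rooted at w contains it, and prepending p_w turns every journey from w into
   one from x: that tree is also an out-tree rooted at x.  Every other such u
   leaves through p_u strictly before the label of p_w, hence reaches x in time
   to use the tree.  The trees for x in X together with the edges p_u thus form
   a temporally connected subgraph of S, which is S itself by minimality. *)

Section Journeys.

Variables (V : finType) (T : nat).
Implicit Types (A B : {set tedge V T}) (u v w x y z : V) (s : nat)
  (l : seq (V * 'I_T.+1)).

Fixpoint twalk A u s l : Prop :=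
  if l is (y, t) :: l' then [/\ ([set u; y], t) \in A, s <= t & twalk A y t.+1 l']
  else True.

Definition next_time s l := last s [seq (val q.2).+1 | q <- l].

Definition journey A u s v l :=
  [/\ twalk A u s l, uniq (u :: map fst l) & last u (map fst l) = v].

Definition treach A u s v := exists l, journey A u s v l.

Definition arrives A u v n := exists l, journey A u 0 v l /\ next_time 0 l = n.

Lemma next_time_rcons s l (q : V * 'I_T.+1) : next_time s (rcons l q) = q.2.+1.
Proof. by rewrite /next_time map_rcons last_rcons. Qed.

Lemma next_time_ge A u s l : twalk A u s l -> s <= next_time s l.
Proof. by elim: l u s => [|[y t] l IH] u s //= [_ le_st /IH]; apply/leq_trans/leqW. Qed.

Lemma twalk_rcons A u s l y t :
  twalk A u s (rcons l (y, t)) <->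
  [/\ twalk A u s l, ([set last u (map fst l); y], t) \in A & next_time s l <= t].
Proof.
elim: l u s => [|[z t'] l IH] u s /=; first by split=> [[]|[]].
split=> [[? ? /IH [? ? ?]] | [[? ? ?] ? ?]] //; split=> //; exact/IH.
Qed.

Lemma twalk_mono A u s s' l : s' <= s -> twalk A u s l -> twalk A u s' l.
Proof. by case: l => [|[y t] l] //= le_s [? /(leq_trans le_s)]. Qed.

Lemma twalk_raise A u s s' l :
  (forall q, q \in A -> u \in q.1 -> s' <= q.2) -> twalk A u s l -> twalk A u s' l.
Proof.
by case: l => [|[y t] l] //= le_s' [At _ ?]; split=> //; apply: le_s' At (set21 _ _).
Qed.

Lemma twalk_subset A B u s l : A \subset B -> twalk A u s l -> twalk B u s l.
Proof. by move/subsetP=> AB; elim: l u s => [|[y t] l IH] u s //= [/AB ? ? /IH]. Qed.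

Definition hops A u xs (ts : seq 'I_T.+1) :=
  forall i, i < size xs ->
    ([set nth u (u :: xs) i; nth u (u :: xs) i.+1], nth ord0 ts i) \in A.

Lemma hops_cons A u y xs t ts :
  hops A u (y :: xs) (t :: ts) <-> ([set u; y], t) \in A /\ hops A y xs ts.
Proof.
have nthE i : i < size xs ->
    [set nth u (u :: y :: xs) i.+1; nth u (u :: y :: xs) i.+2] =
    [set nth y (y :: xs) i; nth y (y :: xs) i.+1].
  by move=> lt_i /=; rewrite !(set_nth_default y u) //= ltnW.
split=> [hs | [Ay hs] [|i] lt_i //].
  by split=> [|i lt_i]; [exact: (hs 0 isT) | rewrite -nthE //; exact: (hs i.+1 lt_i)].
by rewrite nthE //; exact: hs.
Qed.

Lemma twalk_zip A u s xs ts : size ts = size xs ->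
  twalk A u s (zip xs ts) <->
  [/\ all (fun t : 'I_T.+1 => s <= t) ts, sorted ltn (map val ts) & hops A u xs ts].
Proof.
elim: xs ts u s => [|y xs IH] [|t ts] //= u s [/IH {}IH].
rewrite /= path_sortedE ?all_map; last exact: ltn_trans.
split=> [[At le_st /IH [all_t -> hs]] | [/andP [le_st _] /andP [all_t sorted_t]]].
  rewrite le_st all_t; split=> //; last exact/hops_cons.
  by apply: sub_all all_t => t' /ltnW; apply: leq_trans.
by case/hops_cons=> At hs; split=> //; apply/IH.
Qed.

Lemma tpath_treach A u v : tpath A u v <-> treach A u 0 v.
Proof.
split=> [[xs [ts [size_ts uniq_xs last_xs sorted_ts hs]]] | [l [wl uniq_l last_l]]].
  have zipK : map fst (zip xs ts) = xs by rewrite -/(unzip1 _) unzip1_zip // size_ts.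
  exists (zip xs ts); split; rewrite ?zipK //.
  by apply/(twalk_zip _ _ _ size_ts); split=> //; apply/allP.
have size_l : size (unzip2 l) = size (unzip1 l) by rewrite !size_map.
move: wl; rewrite -[l]zip_unzip => /(twalk_zip _ _ _ size_l) [_ sorted_l hs].
by exists (unzip1 l), (unzip2 l); split.
Qed.

Lemma treach_refl A u s : treach A u s u.
Proof. by exists [::]. Qed.

Lemma treach_subset A B u s v : A \subset B -> treach A u s v -> treach B u s v.
Proof. by move=> AB [l [wl ? ?]]; exists l; split=> //; exact: twalk_subset wl. Qed.

Lemma treach_mono A u s s' v : s' <= s -> treach A u s v -> treach A u s' v.
Proof. by move=> le_s [l [wl ? ?]]; exists l; split=> //; exact: twalk_mono wl. Qed.

Lemma treach_suffix A u s v l z :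
  journey A u s v l -> z \in map fst l -> treach A z s.+1 v.
Proof.
elim: l u s => [|[y t] l IH] u s //= [[_ le_st wl] /andP [_ uniq_l] last_l].
rewrite inE => /predU1P [-> | z_l]; first by exists l; split=> //; exact: twalk_mono wl.
by apply: treach_mono (IH _ _ (And3 wl uniq_l last_l) z_l); rewrite ltnS leqW.
Qed.

Lemma treach_cons A x y t s v :
  ([set x; y], t) \in A -> x != y -> s <= t -> treach A y t.+1 v -> treach A x s v.
Proof.
move=> At xy le_st [l jl]; have [x_l | x_notin] := boolP (x \in map fst l).
  by apply: treach_mono _ (treach_suffix jl x_l); rewrite (leq_trans le_st) // leqW.
case: jl => wl uniq_l last_l; exists ((y, t) :: l); split=> //=.
by rewrite inE negb_or xy x_notin.
Qed.

Lemma treach_via_first_edge A u x t w :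
  ([set u; x], t) \in A -> u != x ->
  (forall q, q \in A -> u \in q.1 -> q != ([set u; x], t) -> t < q.2) ->
  treach A u 0 w -> treach A x t w.
Proof.
move=> At ux lt_t [l [wl uniq_l last_l]].
have le_t q : q \in A -> u \in q.1 -> t <= q.2.
  by move=> qA uq; have [-> // | /(lt_t _ qA uq) /ltnW] := eqVneq q ([set u; x], t).
have jt : journey A u t w l by split=> //; exact: twalk_raise le_t wl.
have [x_l | x_notin] := boolP (x \in map fst l).
  exact: treach_mono (leqnSn t) (treach_suffix jt x_l).
have Axu : ([set x; u], t) \in A by rewrite setUC.
apply: (treach_cons Axu _ (leqnn t)); first by rewrite eq_sym.
case: l jt x_notin {wl uniq_l last_l} => [|[y t'] l] [/= wl uniq_l last_l] x_notin.
  by rewrite -last_l; exact: treach_refl.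
case: wl => Ay _ wl; exists ((y, t') :: l); split=> //; split=> //.
have [uy yx] : u != y /\ y != x.
  move: uniq_l x_notin; rewrite !inE !negb_or => /and3P [/andP [uy _] _ _] /andP [xy _].
  by rewrite eq_sym in xy.
apply: lt_t Ay (set21 _ _) _; apply/negP => /eqP [/setP /(_ y)].
by rewrite !inE eqxx orbT [y == u]eq_sym (negbTE uy) (negbTE yx).
Qed.

Lemma arrives_last_hop A u v n : v != u -> arrives A u v n ->
  exists y (t : 'I_T.+1) m, [/\ ([set y; v], t) \in A, t.+1 = n, m <= t & arrives A u y m].
Proof.
move=> vu [l [[wl uniq_l last_l] <-]].
case/lastP: l wl uniq_l last_l => [|l [z t]] wl uniq_l.
  by move=> /= uv; rewrite uv eqxx in vu.
rewrite map_rcons last_rcons /= => zv; subst z.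
case/twalk_rcons: wl => wl At le_t; exists (last u (map fst l)), t, (next_time 0 l).
split=> //; first by rewrite next_time_rcons.
exists l; split=> //; split=> //.
by move: uniq_l; rewrite map_rcons -rcons_cons rcons_uniq => /andP [].
Qed.

End Journeys.

Section Happy.

Variables (V : finType) (T : nat).
Implicit Types (A B : {set tedge V T}) (p q : tedge V T) (u v x y : V).

Lemma happy_subset A B : A \subset B -> happy B -> happy A.
Proof.
move/subsetP=> AB [wf one disj]; split=> [p /AB | e e' t /AB + /AB | e e' t /AB + /AB].
- exact: wf.
- exact: one.
- exact: disj.
Qed.

Lemma happy_other_end A p u :
  happy A -> p \in A -> u \in p.1 -> exists2 y, y != u & p.1 = [set u; y].
Proof.
case=> wf _ _ /wf [card_p _] up.
have /card_gt0P [y] : 0 < #|p.1 :\ u|.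
  by move: card_p; rewrite (cardsD1 u) up add1n => -[->].
rewrite !inE => /andP [yu yp]; exists y => //; apply/eqP.
by rewrite eq_sym eqEcard card_p cards2 eq_sym yu andbT subUset !sub1set up yp.
Qed.

Lemma happy_edge_ends A p u x :
  happy A -> p \in A -> u \in p.1 -> x \in p.1 -> u != x -> p.1 = [set u; x].
Proof.
move=> hapA Ap up xp ux; have [y yu p1] := happy_other_end hapA Ap up.
by move: xp; rewrite p1 !inE eq_sym (negbTE ux) => /eqP <-.
Qed.

Lemma happy_label_inj A p q u :
  happy A -> p \in A -> q \in A -> p.2 = q.2 -> u \in p.1 -> u \in q.1 -> p = q.
Proof.
case=> _ _ disj; case: p q => [e t] [e' t'] /= Ae Ae' tt' ue ue'; subst t'.
have [-> // | ee'] := eqVneq e e'.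
by have /disjointFr/(_ ue) := disj _ _ _ Ae Ae' ee'; rewrite ue'.
Qed.

Definition earliest_at A u p :=
  [&& p \in A, u \in p.1 & [forall q in A, (u \in q.1) ==> (p.2 <= q.2)]].

Lemma earliest_atP A u p :
  reflect [/\ p \in A, u \in p.1 & forall q, q \in A -> u \in q.1 -> p.2 <= q.2]
          (earliest_at A u p).
Proof.
apply: (iffP and3P) => [[-> -> /forall_inP le_p] | [-> -> le_p]].
  by split=> // q /le_p /implyP.
by split=> //; apply/forall_inP => q /le_p /implyP.
Qed.

Lemma earliest_at_exists A u q : q \in A -> u \in q.1 -> exists p, earliest_at A u p.
Proof.
move=> Aq uq; pose P p := (p \in A) && (u \in p.1).
have Pq : P q by rewrite /P Aq uq.
case: (arg_minnP (fun p : tedge V T => val p.2) Pq) => p /andP [Ap up] min_p.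
by exists p; apply/earliest_atP; split=> // q' Aq' uq'; apply: min_p; rewrite /P Aq' uq'.
Qed.

Lemma earliest_at_lt A u p q :
  happy A -> earliest_at A u p -> q \in A -> u \in q.1 -> q != p -> p.2 < q.2.
Proof.
move=> hapA /earliest_atP [Ap up le_p] Aq uq; apply: contraNT; rewrite -leqNgt => le_q.
by rewrite (@happy_label_inj A q p u) //; apply/val_inj/eqP; rewrite eqn_leq le_q le_p.
Qed.

Lemma earliest_at_unique A u p p' :
  happy A -> earliest_at A u p -> earliest_at A u p' -> p = p'.
Proof.
move=> hapA ep ep'; apply/eqP; apply: contraT => pp'.
have /earliest_atP [Ap up _] := ep; have /earliest_atP [Ap' up' _] := ep'.
have lt_p : p.2 < p'.2 by apply: earliest_at_lt hapA ep Ap' up' _; rewrite eq_sym.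
by have := earliest_at_lt hapA ep' Ap up pp'; rewrite ltnNge ltnW.
Qed.

Lemma treach_via_earliest_at S A u x p w :
  happy S -> earliest_at S u p -> p.1 = [set u; x] -> u != x ->
  p \in A -> A \subset S -> treach A u 0 w -> treach A x p.2 w.
Proof.
move=> hapS ep p1 ux Ap AS; apply: treach_via_first_edge ux _.
  by rewrite -p1 -surjective_pairing.
move=> q Aq uq; rewrite -p1 -surjective_pairing.
exact: earliest_at_lt hapS ep (subsetP AS q Aq) uq.
Qed.

Lemma arrives_earliest_at A r p y :
  earliest_at A r p -> p.1 = [set r; y] -> y != r ->
  arrives A r y p.2.+1 /\ forall m, arrives A r y m -> p.2 < m.
Proof.
move=> /earliest_atP [Ap rp le_p] p1 yr; split.
  exists [:: (y, p.2)]; split=> //; split=> //=.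
  - by split=> //; rewrite -p1 -surjective_pairing.
  - by rewrite inE andbT eq_sym.
move=> _ [[|[z t] l] [[wl uniq_l last_l] <-]]; first by rewrite -last_l eqxx in yr.
case: wl => Az _ wl; apply: leq_trans (next_time_ge wl); rewrite ltnS.
exact: le_p Az (set21 _ _).
Qed.

End Happy.

Lemma set2_eq (V : finType) (a b c d : V) :
  [set a; b] = [set c; d] -> (a = c /\ b = d) \/ (a = d /\ b = c).
Proof.
move=> E.
have /set2P Ha : a \in [set c; d] by rewrite -E set21.
have /set2P Hb : b \in [set c; d] by rewrite -E set22.
have /set2P Hc : c \in [set a; b] by rewrite E set21.
have /set2P Hd : d \in [set a; b] by rewrite E set22.
by case: Ha Hb Hc Hd => -> [] -> [] ? [] ?; subst; tauto.
Qed.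

Section ParentTree.

Variables (V : finType) (r : V) (parent : V -> V) (depth : V -> nat).
Hypothesis depth_parent : forall w, w != r -> depth (parent w) < depth w.

Definition parent_edges : {set {set V}} :=
  [set [set parent w; w] | w in [set w | w != r]].

Let adj (y z : V) := [set y; z] \in parent_edges.

Lemma adj_sym : symmetric adj.
Proof. by move=> y z; rewrite /adj setUC. Qed.

Lemma adj_parent w : w != r -> adj w (parent w).
Proof. by move=> wr; rewrite /adj setUC; apply: imset_f; rewrite inE. Qed.

Lemma adj_lower_parent y z : adj y z -> depth y <= depth z -> y = parent z.
Proof.
case/imsetP=> w; rewrite inE => wr /set2_eq [[-> ->] | [-> ->]] // le_w.
by have := leq_ltn_trans le_w (depth_parent wr); rewrite ltnn.
Qed.

Lemma connect_root w : connect adj w r.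
Proof.
elim/ltn_ind: {w}(depth w) {-2}w (erefl (depth w)) => n IH w dw.
have [-> | wr] := eqVneq w r; first exact: connect0.
apply: connect_trans (connect1 (adj_parent wr)) (IH _ _ _ erefl).
by rewrite -dw depth_parent.
Qed.

Lemma parent_edges_connected u v : spath parent_edges u v.
Proof.
have: connect adj u v.
  by rewrite (connect_trans (connect_root u)) // (sym_connect_sym adj_sym) connect_root.
case/connectP=> p /shortenP [p' adj_p' uniq_p' _] ->.
by exists p'; split=> //; move/(pathP u): adj_p'.
Qed.

Lemma parent_edges_acyclic : acyclic parent_edges.
Proof.
move=> x xs size_xs uniq_c adj_xs; apply/negP => adj_last.
have cyc : cycle adj (x :: xs).
  by rewrite /= rcons_path; apply/andP; split; [apply/(pathP x) | exact: adj_last].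
(* The deepest vertex of the cycle would have two distinct cycle neighbours,
   both of which must be its parent. *)
have [z z_c z_max] := @arg_maxnP _ x (mem (x :: xs)) depth (mem_head x xs).
have [i c' rot_c] := rot_to z_c.
have: 1 < size c' by have := size_rot i (x :: xs); rewrite rot_c => -[->].
case: c' rot_c => [|y1 [|y2 c'']] // rot_c _.
have in_c y : y \in z :: y1 :: y2 :: c'' -> depth y <= depth z.
  by rewrite -rot_c mem_rot => /z_max.
move: cyc uniq_c; rewrite -(rot_cycle i) -(rot_uniq i) rot_c.
rewrite [cycle _ _]/= rcons_path => /and4P [adj_z1 _ _ adj_lz].
case/and3P=> _ y1_notin _.
have E1 : y1 = parent z.
  by apply: adj_lower_parent; [rewrite adj_sym | apply: in_c; rewrite !inE eqxx orbT].
have E2 : last y2 c'' = parent z.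
  by apply: adj_lower_parent => //; apply: in_c; rewrite 2!in_cons mem_last !orbT.
by move: y1_notin; rewrite E1 -E2 mem_last.
Qed.

Lemma parent_edges_spanning_tree : spanning_tree parent_edges.
Proof. by split; [exact: parent_edges_connected | exact: parent_edges_acyclic]. Qed.

End ParentTree.

Lemma least_nat (P : nat -> Prop) :
  (exists n, P n) -> exists n, P n /\ forall m, P m -> n <= m.
Proof.
case=> n; elim/ltn_ind: n => n IH Pn.
have [[m [lt_mn Pm]] | no_less] := classic (exists m, m < n /\ P m); first exact: IH Pm.
by exists n; split=> // m Pm; rewrite leqNgt; apply/negP => lt_mn; apply: no_less; exists m.
Qed.

Section ForemostTree.

Variables (V : finType) (T : nat).
Implicit Types (A : {set tedge V T}) (r w : V) (pf : V -> V * 'I_T.+1).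

Definition parent_tedges r pf : {set tedge V T} :=
  [set ([set (pf w).1; w], (pf w).2) | w in [set w | w != r]].

Lemma underlying_parent_tedges r pf :
  underlying (parent_tedges r pf) = parent_edges r (fun w => (pf w).1).
Proof. by rewrite /underlying -imset_comp. Qed.

Section ParentTedges.

Variables (A : {set tedge V T}) (r : V) (a : V -> nat) (pf : V -> V * 'I_T.+1).
Hypothesis pfP : forall w, w != r ->
  [/\ ([set (pf w).1; w], (pf w).2) \in A, (pf w).2.+1 = a w & a (pf w).1 <= (pf w).2].

Lemma parent_tedges_sub : parent_tedges r pf \subset A.
Proof. by apply/subsetP => q /imsetP [w]; rewrite inE => /pfP [Aw _ _] ->. Qed.

Lemma parent_tedges_spanning_tree : spanning_tree (underlying (parent_tedges r pf)).
Proof.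
rewrite underlying_parent_tedges; apply: (@parent_edges_spanning_tree _ _ _ a).
by move=> w /pfP [_ <- le_a]; rewrite ltnS.
Qed.

Lemma parent_tedges_reach w : treach (parent_tedges r pf) r 0 w.
Proof.
suff [l [jl _ _]] : exists l, [/\ journey (parent_tedges r pf) r 0 w l,
    next_time 0 l <= a w & all (fun z => a z <= a w) (map fst l)] by exists l.
elim/ltn_ind: {w}(a w) {-2}w (erefl (a w)) => n IH w aw.
have [-> | wr] := eqVneq w r; first by exists [::]; split.
have [Aw t_aw le_a] := pfP wr.
have lt_aw : a (pf w).1 < a w by rewrite -t_aw ltnS.
have [l [[wl uniq_l last_l] next_l all_l]] := IH _ (leq_trans lt_aw (eq_leq aw)) _ erefl.
exists (rcons l (w, (pf w).2)); split.
- split; last by rewrite map_rcons last_rcons.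
    apply/twalk_rcons; split=> //; last exact: leq_trans next_l le_a.
    by rewrite last_l; apply: imset_f; rewrite inE.
  rewrite map_rcons -rcons_cons rcons_uniq uniq_l andbT inE negb_or wr /=.
  by apply: contraTN lt_aw => /(allP all_l); rewrite -leqNgt.
- by rewrite next_time_rcons t_aw.
- rewrite map_rcons all_rcons leqnn; apply: sub_all all_l => z /leq_trans; apply.
  exact: ltnW.
Qed.

End ParentTedges.

Lemma foremost_tree A r : happy A -> (forall w, treach A r 0 w) ->
  exists Tr : {set tedge V T},
    [/\ Tr \subset A, spanning_tree (underlying Tr), forall w, treach Tr r 0 w
      & forall p, earliest_at A r p -> p \in Tr].
Proof.
move=> hapA reach_r.
(* a w is the earliest arrival at w (plus one); the last hop of an earliest
   journey to w gives the parent of w. *)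
have /fin_all_exists [a a_min] w :
    exists n, arrives A r w n /\ forall m, arrives A r w m -> n <= m.
  by apply: least_nat; have [l jl] := reach_r w; exists (next_time 0 l), l.
have /fin_all_exists [pf pfP] w : exists yt : V * 'I_T.+1, w != r ->
    [/\ ([set yt.1; w], yt.2) \in A, yt.2.+1 = a w & a yt.1 <= yt.2].
  have [-> | wr] := eqVneq w r; first by exists (r, ord0) => /eqP.
  have [y [t [m [At t_aw le_mt ar_y]]]] := arrives_last_hop wr (a_min w).1.
  by exists (y, t) => _; split=> //; exact: leq_trans ((a_min y).2 _ ar_y) le_mt.
exists (parent_tedges r pf); split.
- exact: parent_tedges_sub pfP.
- exact: parent_tedges_spanning_tree pfP.
- exact: parent_tedges_reach pfP.
move=> p /[dup] ep /earliest_atP [Ap rp _].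
have [y yr p1] := happy_other_end hapA Ap rp.
have [ar_y lt_y] := arrives_earliest_at ep p1 yr.
have [Ay t_ay _] := pfP y yr.
have -> : p = ([set (pf y).1; y], (pf y).2).
  apply: (happy_label_inj hapA Ap Ay) (_ : y \in p.1) (set22 _ _); last by rewrite p1 set22.
  apply/val_inj/succn_inj/eqP; rewrite t_ay eqn_leq ((a_min y).2 _ ar_y) andbT.
  exact: lt_y (a_min y).1.
by apply: imset_f; rewrite inE.
Qed.

End ForemostTree.

Section HubTree.

Variables (V : finType) (T : nat).
Implicit Types (S : {set tedge V T}) (u w x : V).

Definition hub_tree S x (Tx : {set tedge V T}) :=
  [/\ Tx \subset S, spanning_tree (underlying Tx), forall w, treach Tx x 0 w
    & forall u p, u != x -> earliest_at S u p -> x \in p.1 ->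
        forall w, treach (p |: Tx) u 0 w].

Lemma hub_tree_of_latest_pendant S x w0 p0 :
  happy S -> (forall u w, treach S u 0 w) ->
  w0 != x -> earliest_at S w0 p0 -> x \in p0.1 ->
  (forall u p, u != x -> earliest_at S u p -> x \in p.1 -> p.2 <= p0.2) ->
  exists Tx, hub_tree S x Tx.
Proof.
move=> hapS reachS w0x /[dup] ep0 /earliest_atP [Sp0 w0p0 _] xp0 max_p0.
have p01 := happy_edge_ends hapS Sp0 w0p0 xp0 w0x.
have [Tr [TrS tree reach_w0 earliest_in]] := foremost_tree hapS (reachS w0).
have reach_x (A : {set tedge V T}) :
    Tr \subset A -> A \subset S -> forall w, treach A x p0.2 w.
  move=> TrA AS w; have Ap0 := subsetP TrA _ (earliest_in _ ep0).
  exact: treach_via_earliest_at hapS ep0 p01 w0x Ap0 AS (treach_subset TrA (reach_w0 w)).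
exists Tr; split=> // [w | u p ux ep xp w].
  exact: treach_mono (leq0n _) (reach_x Tr (subxx _) TrS w).
have /earliest_atP [Sp up _] := ep.
have p1 := happy_edge_ends hapS Sp up xp ux.
have [w0u | w0u] := eqVneq w0 u.
  subst u; rewrite (earliest_at_unique hapS ep ep0).
  exact: treach_subset (subsetUr _ _) (reach_w0 w).
have lt_p : p.2 < p0.2.
  rewrite ltn_neqAle (max_p0 u p) // andbT; apply: contra_neq w0u => /val_inj eq_t.
  have p0p : p0 = p by apply: happy_label_inj hapS Sp0 Sp (esym eq_t) xp0 xp.
  by move: w0p0; rewrite p0p p1 !inE (negbTE w0x) orbF => /eqP.
have Ap : ([set u; x], p.2) \in p |: Tr by rewrite -p1 -surjective_pairing setU11.
apply: treach_cons Ap ux (leq0n _) (treach_mono lt_p (reach_x _ (subsetUr _ _) _ w)).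
by rewrite subUset sub1set Sp TrS.
Qed.

Lemma hub_tree_exists S x :
  happy S -> (forall u w, treach S u 0 w) -> exists Tx, hub_tree S x Tx.
Proof.
move=> hapS reachS.
pose pendant (up : V * tedge V T) := [&& up.1 != x, earliest_at S up.1 up.2 & x \in up.2.1].
have [/existsP [up0 pendant0] | /existsPn no_pendant] := boolP [exists up, pendant up].
  case: (arg_maxnP (fun up : V * tedge V T => val up.2.2) pendant0) => [[w0 p0]].
  case/and3P=> /= w0x ep0 xp0 max_p0.
  apply: hub_tree_of_latest_pendant hapS reachS w0x ep0 xp0 _ => u p ux ep xp.
  by apply: (max_p0 (u, p)); rewrite /pendant /= ux ep xp.
have [Tx [TxS tree reach_x _]] := foremost_tree hapS (reachS x).
exists Tx; split=> // u p ux ep xp; have := no_pendant (u, p).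
by rewrite /pendant /= ux ep xp.
Qed.

End HubTree.

Section HubCover.

Variables (V : finType) (T : nat) (S : {set tedge V T}) (X : {set V})
  (F : V -> {set tedge V T}).
Hypotheses (connS : tconnected S) (coverS : vertex_cover S X)
  (hubF : forall x, hub_tree S x (F x)).

Definition pendant_edge u := if u \in X then None else [pick p | earliest_at S u p].

Definition hub_cover :=
  (\bigcup_(i < #|X|) F (enum_val i)) :|: [set p | [exists v, pendant_edge v == Some p]].

Lemma pendant_edgeP u p : pendant_edge u = Some p -> u \notin X /\ earliest_at S u p.
Proof. by rewrite /pendant_edge; case: ifP => // _; case: pickP => // q eq [<-]. Qed.

Lemma hub_cover_sub : hub_cover \subset S.
Proof.
rewrite subUset; apply/andP; split.
  by apply/bigcupsP => i _; case: (hubF (enum_val i)).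
apply/subsetP => p; rewrite inE => /existsP [v /eqP /pendant_edgeP [_]].
by case/earliest_atP.
Qed.

Lemma hub_cover_tconnected : tconnected hub_cover.
Proof.
have F_sub x : x \in X -> F x \subset hub_cover.
  move=> xX; rewrite -(enum_rankK_in xX xX); apply/subsetU/orP; left.
  exact: (bigcup_sup (enum_rank_in xX x)).
move=> a b ab; apply/tpath_treach; have [aX | aX] := boolP (a \in X).
  by case: (hubF a) => _ _ reach_a _; apply: treach_subset (F_sub _ aX) (reach_a b).
have [q [Sq aq]] : exists q, q \in S /\ a \in q.1.
  have [[|[y t] l] [wl _ last_l]] := (tpath_treach _ _ _).1 (connS ab).
    by rewrite -last_l eqxx in ab.
  by case: wl => Sq _ _; exists ([set a; y], t); rewrite set21.
have [p Ea] : exists p, pendant_edge a = Some p.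
  rewrite /pendant_edge (negbTE aX); case: pickP => [p _ | none]; first by exists p.
  by have [p0 ep0] := earliest_at_exists Sq aq; rewrite none in ep0.
have [_ /[dup] ep /earliest_atP [Sp ap _]] := pendant_edgeP Ea.
have := coverS Sp; rewrite -setI_eq0 => /set0Pn [x]; rewrite inE => /andP [xp xX].
have ax : a != x by apply: contraNneq aX => ->.
have p_in : p \in hub_cover.
  by rewrite !inE; apply/orP; right; apply/existsP; exists a; rewrite Ea.
case: (hubF x) => _ _ _ /(_ a p ax ep xp b); apply: treach_subset.
by rewrite subUset sub1set p_in F_sub.
Qed.

End HubCover.

Theorem lemma13 (V : finType) (T : nat) (E : {set tedge V T}) (X : {set V})
    (S : {set tedge V T}) :
  happy E -> tconnected E -> vertex_cover E X -> min_tspanner E S ->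
  exists k : nat, k <= #|X| /\
    exists (r : 'I_k -> V) (F : 'I_k -> {set tedge V T})
           (g : V -> option (tedge V T)),
      [/\ forall i, r i \in X,
          forall i, out_tree E (r i) (F i),
          forall v p, g v = Some p -> v \notin X /\ v \in p.1
        & S = (\bigcup_(i < k) F i) :|: [set p | [exists v, g v == Some p]]].
Proof.
move=> hapE _ coverE [[SE connS] minS].
have hapS := happy_subset SE hapE.
have reachS u w : treach S u 0 w.
  by have [-> | uw] := eqVneq u w; [exact: treach_refl | exact/tpath_treach/connS].
have /fin_all_exists [F hubF] x := hub_tree_exists x hapS reachS.
have coverS : vertex_cover S X by move=> p /(subsetP SE); exact: coverE.
have subS := hub_cover_sub X hubF.
have -> : S = hub_cover S X F.
  apply/eqP; rewrite eq_sym eqEcard subS minS //; split; first exact: subset_trans subS SE.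
  exact: hub_cover_tconnected connS coverS hubF.
exists #|X|; split=> //; exists enum_val, (fun i => F (enum_val i)), (pendant_edge S X).
split=> // [i | i | v p /pendant_edgeP [vX /earliest_atP [_ vp _]]]; last by [].
- exact: enum_valP.
- have [FS tree reach_i _] := hubF (enum_val i); split=> //; first exact: subset_trans FS SE.
  by move=> v _; apply/tpath_treach.
Qed.
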